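(* Let $S$ be a left Fountain-Gould order in an inverse semigroup $Q$. Then $S$ is a straight left I-order in $Q$.
   Context: For $a$ in a semigroup $Q$ lying in a subgroup of $Q$, $a^{\sharp}$ denotes its inverse in the maximal subgroup containing it; in an inverse semigroup $a^{-1}$ denotes the unique inverse of $a$. An element $a$ of a semigroup $S$ is square-cancellable if $a\,\mathcal{H}^*\,a^2$, i.e. for all $x,y\in S^1$, $xa=ya\Leftrightarrow xa^2=ya^2$ and $ax=ay\Leftrightarrow a^2x=a^2y$. A subsemigroup $S$ of a semigroup $Q$ is a left Fountain-Gould order in $Q$ if every $q\in Q$ can be written $q=a^{\sharp}b$ with $a,b\in S$ and $a$ lying in a subgroup of $Q$, and every square-cancellable element of $S$ lies in a subgroup of $Q$. A subsemigroup $S$ of an inverse semigroup $Q$ is a straight left I-order in $Q$ if every $q\in Q$ can be written $q=a^{-1}b$ with $a,b\in S$ and $a\,\mathcal{R}\,b$ in $Q$. *)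

Section Semigroups.
Variable Q : Type.
Variable mul : Q -> Q -> Q.

Definition associative_op : Prop :=
  forall x y z, mul x (mul y z) = mul (mul x y) z.

Definition is_inverse (a x : Q) : Prop :=
  mul (mul a x) a = a /\ mul (mul x a) x = x.

Definition inverse_semigroup : Prop :=
  forall a, exists x, is_inverse a x /\ forall y, is_inverse a y -> y = x.

Definition subsemigroup (S : Q -> Prop) : Prop :=
  forall x y, S x -> S y -> S (mul x y).

Definition subgroup_with (H : Q -> Prop) (e : Q) : Prop :=
  H e /\
  (forall x y, H x -> H y -> H (mul x y)) /\
  (forall h, H h -> mul e h = h /\ mul h e = h) /\
  (forall h, H h -> exists g, H g /\ mul h g = e /\ mul g h = e).

Definition in_subgroup (a : Q) : Prop :=
  exists H e, subgroup_with H e /\ H a.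

(* x = a^#, the group inverse of a in a subgroup of Q containing a
   (this coincides with its inverse in the maximal subgroup containing a,
   since every subgroup containing a lies in H_a with the same identity) *)
Definition is_sharp (a x : Q) : Prop :=
  exists H e, subgroup_with H e /\ H a /\ H x /\ mul a x = e /\ mul x a = e.

(* Elements of S^1 (resp. Q^1) are represented as option Q, None being the
   adjoined identity 1. *)
Definition lmul1 (x : option Q) (a : Q) : Q :=
  match x with Some x => mul x a | None => a end.
Definition rmul1 (a : Q) (x : option Q) : Q :=
  match x with Some x => mul a x | None => a end.
Definition in1 (S : Q -> Prop) (x : option Q) : Prop :=
  match x with Some x => S x | None => True end.

(* a is square-cancellable in S: a H* a^2 in S *)
Definition square_cancellable (S : Q -> Prop) (a : Q) : Prop :=
  forall x y, in1 S x -> in1 S y ->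
    (lmul1 x a = lmul1 y a <-> lmul1 x (mul a a) = lmul1 y (mul a a)) /\
    (rmul1 a x = rmul1 a y <-> rmul1 (mul a a) x = rmul1 (mul a a) y).

Definition green_R (a b : Q) : Prop :=
  (exists x : option Q, a = rmul1 b x) /\ (exists y : option Q, b = rmul1 a y).

Definition left_FG_order (S : Q -> Prop) : Prop :=
  (forall q, exists a b x, S a /\ S b /\ in_subgroup a /\ is_sharp a x /\
                           q = mul x b) /\
  (forall a, S a -> square_cancellable S a -> in_subgroup a).

Definition straight_left_I_order (S : Q -> Prop) : Prop :=
  forall q, exists a b x, S a /\ S b /\ green_R a b /\ is_inverse a x /\
                          q = mul x b.

End Semigroups.

(* In an inverse semigroup a group inverse a^# is the inverse a⁻¹, and
   x R y iff x x⁻¹ = y y⁻¹.  Given q = a⁻¹ b with a in a subgroup, put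
   d = ab and t = (d d⁻¹) a²; then t R d and q = t⁻¹ d, but t need not lie
   in S.  Writing t = u⁻¹ v with u in a subgroup, left multiplication by u²
   preserves R, moves t into S (u² t = uv), and does not change the quotient,
   because u⁻² u² = u⁻¹ u is an idempotent fixing t. *)

From Stdlib Require Import IndefiniteDescription.

Section InverseSemigroup.

Variable Q : Type.
Variable mul : Q -> Q -> Q.
Hypothesis mulA : associative_op Q mul.
Hypothesis inverseQ : inverse_semigroup Q mul.

Local Infix "·" := mul (at level 40, left associativity).

Ltac assoc := repeat rewrite mulA.

Definition inv (a : Q) : Q :=
  proj1_sig (constructive_indefinite_description _ (inverseQ a)).

Local Notation "a ⁻¹" := (inv a) (at level 2, left associativity, format "a ⁻¹").

Definition idempotent (e : Q) : Prop := e · e = e.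

Definition group_elt (a : Q) : Prop := a · a⁻¹ = a⁻¹ · a.

Lemma inv_spec a : is_inverse Q mul a a⁻¹ /\ forall y, is_inverse Q mul a y -> y = a⁻¹.
Proof.
  unfold inv; destruct (constructive_indefinite_description _ _) as [x Hx]; exact Hx.
Qed.

Lemma inv_unique a y : is_inverse Q mul a y -> y = a⁻¹.
Proof. apply inv_spec. Qed.

Lemma mul_inv_mul a : a · a⁻¹ · a = a.
Proof. exact (proj1 (proj1 (inv_spec a))). Qed.

Lemma inv_mul_inv a : a⁻¹ · a · a⁻¹ = a⁻¹.
Proof. exact (proj2 (proj1 (inv_spec a))). Qed.

Lemma inv_idempotent e : idempotent e -> e⁻¹ = e.
Proof. intro He; symmetry; apply inv_unique; split; rewrite He; exact He. Qed.

Lemma idempotent_mul_inv a : idempotent (a · a⁻¹).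
Proof. unfold idempotent; assoc; now rewrite mul_inv_mul. Qed.

Lemma idempotent_inv_mul a : idempotent (a⁻¹ · a).
Proof. unfold idempotent; assoc; now rewrite inv_mul_inv. Qed.

Lemma idempotent_mul e f : idempotent e -> idempotent f -> idempotent (e · f).
Proof.
  intros He Hf.
  set (x := (e · f)⁻¹).
  destruct (inv_spec (e · f)) as [[Hx1 Hx2] _]; fold x in Hx1, Hx2.
  (* f x e is also an inverse of e f, hence equal to x; this makes x idempotent *)
  assert (Hfxe : f · x · e = x).
  { apply inv_unique; split.
    - transitivity (e · (f · f) · x · (e · e) · f); [assoc; reflexivity|].
      rewrite He, Hf; transitivity (e · f · x · (e · f)); [assoc; reflexivity|].
      exact Hx1.
    - transitivity (f · x · (e · e) · (f · f) · x · e); [assoc; reflexivity|].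
      rewrite He, Hf; transitivity (f · (x · (e · f) · x) · e); [assoc; reflexivity|].
      now rewrite Hx2. }
  assert (Hxx : idempotent x).
  { unfold idempotent; rewrite <- Hfxe at 1 2.
    transitivity (f · (x · (e · f) · x) · e); [assoc; reflexivity|].
    now rewrite Hx2. }
  assert (Hef : e · f = x⁻¹) by (apply inv_unique; split; assumption).
  unfold idempotent; rewrite Hef, (inv_idempotent _ Hxx); exact Hxx.
Qed.

Lemma idempotent_comm e f : idempotent e -> idempotent f -> e · f = f · e.
Proof.
  intros He Hf.
  pose proof (idempotent_mul e f He Hf) as Hef.
  pose proof (idempotent_mul f e Hf He) as Hfe.
  rewrite <- (inv_idempotent _ Hef); symmetry; apply inv_unique; split.
  - transitivity ((e · f) · (f · e) · (e · f)); [reflexivity|].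
    transitivity (e · (f · f) · (e · e) · f); [assoc; reflexivity|].
    rewrite He, Hf; transitivity ((e · f) · (e · f)); [assoc; reflexivity|]; exact Hef.
  - transitivity (f · (e · e) · (f · f) · e); [assoc; reflexivity|].
    rewrite He, Hf; transitivity ((f · e) · (f · e)); [assoc; reflexivity|]; exact Hfe.
Qed.

Lemma inv_mul a b : (a · b)⁻¹ = b⁻¹ · a⁻¹.
Proof.
  symmetry; apply inv_unique; split.
  - transitivity (a · (b · b⁻¹ · (a⁻¹ · a)) · b); [assoc; reflexivity|].
    rewrite (idempotent_comm _ _ (idempotent_mul_inv b) (idempotent_inv_mul a)).
    transitivity ((a · a⁻¹ · a) · (b · b⁻¹ · b)); [assoc; reflexivity|].
    now rewrite !mul_inv_mul.
  - transitivity (b⁻¹ · (a⁻¹ · a · (b · b⁻¹)) · a⁻¹); [assoc; reflexivity|].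
    rewrite <- (idempotent_comm _ _ (idempotent_mul_inv b) (idempotent_inv_mul a)).
    transitivity ((b⁻¹ · b · b⁻¹) · (a⁻¹ · a · a⁻¹)); [assoc; reflexivity|].
    now rewrite !inv_mul_inv.
Qed.

Lemma inv_mulr_idempotent g t : idempotent g -> g · t = t -> t⁻¹ · g = t⁻¹.
Proof. intros Hg Hgt; rewrite <- (inv_idempotent g Hg), <- inv_mul, Hgt; reflexivity. Qed.

Lemma green_R_mul_inv a b : a · a⁻¹ = b · b⁻¹ -> green_R Q mul a b.
Proof.
  intro Hab; split.
  - exists (Some (b⁻¹ · a)); simpl.
    now rewrite mulA, <- Hab, mul_inv_mul.
  - exists (Some (a⁻¹ · b)); simpl.
    now rewrite mulA, Hab, mul_inv_mul.
Qed.

Lemma mul_inv_mull c t d :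
  t · t⁻¹ = d · d⁻¹ -> c · t · (c · t)⁻¹ = c · d · (c · d)⁻¹.
Proof.
  intro Htd; rewrite !inv_mul.
  transitivity (c · (t · t⁻¹) · c⁻¹); [assoc; reflexivity|].
  rewrite Htd; assoc; reflexivity.
Qed.

Lemma is_sharp_group_elt a x : is_sharp Q mul a x -> x = a⁻¹ /\ group_elt a.
Proof.
  intros (H & e & (_ & _ & Hid & _) & Ha & Hx & Hax & Hxa).
  destruct (Hid a Ha) as [Hea _]; destruct (Hid x Hx) as [Hex _].
  assert (Hinv : x = a⁻¹)
    by (apply inv_unique; split; [rewrite Hax | rewrite Hxa]; assumption).
  split; [exact Hinv|].
  unfold group_elt; rewrite <- Hinv, Hax, Hxa; reflexivity.
Qed.

Lemma group_elt_mul_mul_inv a : group_elt a -> a · a · a⁻¹ = a.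
Proof. intro Ha; rewrite <- mulA, Ha, mulA; apply mul_inv_mul. Qed.

Lemma group_elt_inv_mul_sq a : group_elt a -> (a · a)⁻¹ · (a · a) = a⁻¹ · a.
Proof.
  intro Ha; rewrite inv_mul.
  transitivity (a⁻¹ · (a · a⁻¹) · a); [rewrite Ha; assoc; reflexivity|].
  rewrite mulA, inv_mul_inv; reflexivity.
Qed.

Lemma group_quotient_R_form a b :
  group_elt a -> exists t, t · t⁻¹ = a · b · (a · b)⁻¹ /\ a⁻¹ · b = t⁻¹ · (a · b).
Proof.
  intro Ha.
  set (d := a · b); set (f := d · d⁻¹).
  assert (Hf : idempotent f) by apply idempotent_mul_inv.
  assert (Hfd : f · d = d) by apply mul_inv_mul.
  assert (Hef : a · a⁻¹ · f = f)
    by (unfold f, d; rewrite !mulA, mul_inv_mul; reflexivity).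
  assert (Hinv_t : (f · (a · a))⁻¹ = (a · a)⁻¹ · f)
    by (rewrite inv_mul, (inv_idempotent f Hf); reflexivity).
  exists (f · (a · a)); split.
  - rewrite Hinv_t, inv_mul.
    transitivity (f · (a · a · a⁻¹ · a⁻¹) · f); [assoc; reflexivity|].
    rewrite (group_elt_mul_mul_inv a Ha), <- mulA, Hef; exact Hf.
  - rewrite Hinv_t, <- (mulA _ f d), Hfd; unfold d; rewrite inv_mul; symmetry.
    transitivity (a⁻¹ · (a⁻¹ · a) · b); [assoc; reflexivity|].
    rewrite <- Ha, mulA, inv_mul_inv; reflexivity.
Qed.

Lemma group_elt_straighten u v d :
  group_elt u -> (u⁻¹ · v) · (u⁻¹ · v)⁻¹ = d · d⁻¹ ->
  u · v · (u · v)⁻¹ = u · u · d · (u · u · d)⁻¹ /\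
  (u · v)⁻¹ · (u · u · d) = (u⁻¹ · v)⁻¹ · d.
Proof.
  intros Hu Htd.
  set (t := u⁻¹ · v) in Htd |- *.
  assert (Huv : u · v = u · u · t)
    by (unfold t; rewrite mulA, group_elt_mul_mul_inv; auto).
  assert (Hgt : u⁻¹ · u · t = t) by (unfold t; rewrite mulA, inv_mul_inv; reflexivity).
  rewrite Huv; split; [now apply mul_inv_mull|].
  rewrite inv_mul.
  transitivity (t⁻¹ · ((u · u)⁻¹ · (u · u)) · d); [assoc; reflexivity|].
  rewrite group_elt_inv_mul_sq, inv_mulr_idempotent;
    auto using idempotent_inv_mul.
Qed.

End InverseSemigroup.

Theorem lemma2p2 (Q : Type) (mul : Q -> Q -> Q) (S : Q -> Prop) :
  associative_op Q mul ->
  inverse_semigroup Q mul ->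
  subsemigroup Q mul S ->
  left_FG_order Q mul S ->
  straight_left_I_order Q mul S.
Proof.
  intros HA HI HS [Hquot _] q.
  destruct (Hquot q) as (a & b & x & Sa & Sb & _ & Hsharp & ->).
  destruct (is_sharp_group_elt Q mul HI a x Hsharp) as [-> Ha].
  destruct (group_quotient_R_form Q mul HA HI a b Ha) as (t & Htd & ->).
  destruct (Hquot t) as (u & v & y & Su & Sv & _ & Hsharp_u & Ht).
  destruct (is_sharp_group_elt Q mul HI u y Hsharp_u) as [-> Hu].
  subst t.
  destruct (group_elt_straighten Q mul HA HI u v (mul a b) Hu Htd) as [HR Hq].
  exists (mul u v), (mul (mul u u) (mul a b)), (inv Q mul HI (mul u v)).
  split; [apply HS; assumption|].
  split; [repeat apply HS; assumption|].
  split; [exact (green_R_mul_inv Q mul HA HI _ _ HR)|].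
  split; [exact (proj1 (inv_spec Q mul HI _))|].
  symmetry; exact Hq.
Qed.
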